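(* Let $\{\hat x_t\}_{t\ge0}$, $\hat x_t=\frac1M\sum_m x_t^m$, be the average points generated by Algorithm SAVIC (described in the context), and let $\hat D^t$ denote the scaling matrix at iteration $t$, obtained by the update rules in the context, where $D^0$ and all $H^t$ are diagonal with $\alpha I\preceq D^0\preceq\Gamma I$ and $\alpha I\preceq H^t\preceq\Gamma I$ for some $0<\alpha\le\Gamma$. Then $$\|\hat x_{t+1}-x_*\|^2_{\hat D^{t+1}}\le\big(1+(1-\beta_{t+1})C\big)\|\hat x_{t+1}-x_*\|^2_{\hat D^t},$$ with $C=\frac{\Gamma^2}{2\alpha^2}$ for the squared update rule and $C=\frac{2\Gamma}{\alpha}$ for the linear update rule. In particular, if $\beta_{t+1}\ge1-\frac{\gamma\mu\alpha^2}{\Gamma^3}$ (squared rule) or $\beta_{t+1}\ge1-\frac{\gamma\mu\alpha}{4\Gamma^2}$ (linear rule), then $$\|\hat x_{t+1}-x_*\|^2_{\hat D^{t+1}}\le\left(1+\frac{\gamma\mu}{2\Gamma}\right)\|\hat x_{t+1}-x_*\|^2_{\hat D^t}.$$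
   Context: Problem: minimize $f(x)=\frac1M\sum_{m=1}^Mf_m(x)$ over $\mathbb R^d$, $x_*$ a solution; $\mu\ge0$ is the strong convexity constant of the $f_m$, $\gamma>0$ the stepsize. For a positive definite matrix $A$, $\|x\|_A^2=\langle x,Ax\rangle$. Update rules: diagonal matrices $D^t$ satisfy either the squared rule $(D^t)^2=\beta_t(D^{t-1})^2+(1-\beta_t)(H^t)^2$ or the linear rule $D^t=\beta_tD^{t-1}+(1-\beta_t)H^t$, with $\beta_t\in[0,1]$ and $H^t$ diagonal; then $(\hat D^t)_{ii}=\max\{\alpha,|D^t_{ii}|\}$. Algorithm SAVIC: stepsize $\gamma$, $x_0^m=x_0$, synchronization times $t_0=0<t_1<\dots$; at $t=t_p$ the preconditioner $\hat D^{t_p}$ is updated and is used (by all clients) for all $t_p\le t<t_{p+1}$ (so the scaling matrix at iteration $t$ is $\hat D^{t_p}$); client $m$ samples $z_m\sim\mathcal D_m$ and sets $x_{t+1}^m=\frac1M\sum_j(x_t^j-\gamma(\hat D^{t_p})^{-1}\nabla f_j(x_t^j,z_j))$ if $t=t_p$ for some $p$, else $x_{t+1}^m=x_t^m-\gamma(\hat D^{t_p})^{-1}\nabla f_m(x_t^m,z_m)$. *)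

From mathcomp Require Import all_boot all_order all_algebra.
Set Implicit Arguments. Unset Strict Implicit. Unset Printing Implicit Defensive.
Import Order.TTheory GRing.Theory Num.Theory.
Local Open Scope ring_scope.

(* Vectors of R^d are functions 'I_d -> R; diagonal matrices are represented
   by their diagonal, also a function 'I_d -> R. *)

Section Defs.
Variables (R : realFieldType) (d : nat).

Definition vec := 'I_d -> R.

Definition wnorm2 (w v : vec) : R := \sum_(i < d) w i * v i ^+ 2.

Definition sqnorm (v : vec) : R := \sum_(i < d) v i ^+ 2.

Definition vsub (u v : vec) : vec := fun i => u i - v i.

(* (\hat D)_ii = max{alpha, |D_ii|} *)
Definition clip (alpha : R) (D : vec) : vec := fun i => Num.max alpha `|D i|.

Inductive rule := Squared | Linear.

Definition update (r : rule) (beta : R) (Dprev H Dnext : vec) : Prop :=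
  match r with
  | Squared => forall i, Dnext i ^+ 2 = beta * Dprev i ^+ 2 + (1 - beta) * H i ^+ 2
  | Linear  => forall i, Dnext i = beta * Dprev i + (1 - beta) * H i
  end.

Definition Cconst (r : rule) (alpha Gamma : R) : R :=
  match r with
  | Squared => Gamma ^+ 2 / (2 * alpha ^+ 2)
  | Linear  => 2 * Gamma / alpha
  end.

Definition beta_gap (r : rule) (gamma mu alpha Gamma : R) : R :=
  match r with
  | Squared => gamma * mu * alpha ^+ 2 / Gamma ^+ 3
  | Linear  => gamma * mu * alpha / (4 * Gamma ^+ 2)
  end.

(* mu-strong convexity, stated without derivatives. *)
Definition strongly_convex (mu : R) (f : vec -> R) : Prop :=
  forall (x y : vec) (l : R), 0 <= l -> l <= 1 ->
    f (fun i => l * x i + (1 - l) * y i)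
    <= l * f x + (1 - l) * f y - mu / 2 * l * (1 - l) * sqnorm (vsub x y).

(* Index of the last synchronization time t_p <= t (sync times are the t with
   sync t = true; t_0 = 0). *)
Fixpoint last_sync (sync : nat -> bool) (t : nat) : nat :=
  match t with
  | 0 => 0
  | t'.+1 => if sync t'.+1 then t'.+1 else last_sync sync t'
  end.

Definition avg (M : nat) (x : 'I_M -> vec) : vec :=
  fun i => M%:R^-1 * \sum_(m < M) x m i.

End Defs.

From mathcomp Require Import all_boot all_order all_algebra ring lra.
Import Order.TTheory GRing.Theory Num.Theory.
Set Implicit Arguments. Unset Strict Implicit. Unset Printing Implicit Defensive.
Local Open Scope ring_scope.

(* The two weighted norms differ only through their diagonal weights, so it is
   enough to compare the clipped diagonals entrywise.  By induction every
   |D^t_ii| stays in [alpha, Gamma] (each update is a convex combination of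
   values in that range, in the squares for the squared rule), so clipping is
   inactive.  One update then moves an entry by at most (1 - beta) Gamma for the
   linear rule, and its square by at most (1 - beta) Gamma^2 for the squared
   rule; as the entry is at least alpha, this is a relative change of at most
   (1 - beta) C.  The threshold on beta makes (1 - beta) C <= gamma mu / (2 Gamma). *)

Section WeightedNorm.
Variables (R : realFieldType) (d : nat).

Lemma wnorm2_ge0 (w v : vec R d) : (forall i, 0 <= w i) -> 0 <= wnorm2 w v.
Proof.
by move=> w_ge0; apply: sumr_ge0 => i _; rewrite mulr_ge0 ?sqr_ge0.
Qed.

Lemma wnorm2_le_scale (c : R) (w w' v : vec R d) :
  (forall i, w' i <= c * w i) -> wnorm2 w' v <= c * wnorm2 w v.
Proof.
move=> le_w; rewrite /wnorm2 mulr_sumr; apply: ler_sum => i _.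
by rewrite mulrA ler_wpM2r ?sqr_ge0.
Qed.

Lemma clip_ge (alpha : R) (D : vec R d) i : alpha <= clip alpha D i.
Proof. by rewrite /clip le_max lexx. Qed.

Lemma clip_id (alpha : R) (D : vec R d) i :
  alpha <= `|D i| -> clip alpha D i = `|D i|.
Proof. by move=> h; rewrite /clip max_r. Qed.

End WeightedNorm.

Section UpdateStep.
Variables (R : realFieldType) (alpha Gamma beta : R).
Hypotheses (alpha_gt0 : 0 < alpha) (alpha_le_Gamma : alpha <= Gamma).
Hypothesis beta_01 : 0 <= beta <= 1.

Lemma convex_comb_within (lo hi a b : R) :
  lo <= a <= hi -> lo <= b <= hi -> lo <= beta * a + (1 - beta) * b <= hi.
Proof.
move: beta_01 => /andP[b0 b1] /andP[la ah] /andP[lb bh].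
have ? : 0 <= beta * (a - lo) by rewrite mulr_ge0 ?subr_ge0.
have ? : 0 <= (1 - beta) * (b - lo) by rewrite mulr_ge0 ?subr_ge0.
have ? : 0 <= beta * (hi - a) by rewrite mulr_ge0 ?subr_ge0.
have ? : 0 <= (1 - beta) * (hi - b) by rewrite mulr_ge0 ?subr_ge0.
by apply/andP; split; lra.
Qed.

Lemma sqr_withinE (a : R) :
  0 <= a -> (alpha ^+ 2 <= a ^+ 2 <= Gamma ^+ 2) = (alpha <= a <= Gamma).
Proof.
have Gamma_ge0 : 0 <= Gamma by apply: le_trans alpha_le_Gamma; exact: ltW.
by move=> a_ge0; rewrite !ler_pXn2r ?nnegrE ?(ltW alpha_gt0).
Qed.

(* Taking square roots in b^2 <= a^2 + k costs only the factor
   1 + k / (2 alpha^2), since (1 + s)^2 >= 1 + 2 s and a^2 >= alpha^2. *)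
Lemma le_sqrt_step (a b k : R) :
  alpha <= a -> 0 <= b -> 0 <= k -> b ^+ 2 <= a ^+ 2 + k ->
  b <= (1 + k / (2 * alpha ^+ 2)) * a.
Proof.
move=> le_alpha_a b_ge0 k_ge0 le_b2.
have a_ge0 : 0 <= a by exact: le_trans (ltW alpha_gt0) _.
set s := k / (2 * alpha ^+ 2).
have s_ge0 : 0 <= s by rewrite divr_ge0 // mulr_ge0 // sqr_ge0.
have k_le : k <= a ^+ 2 * (2 * s).
  have -> : k = alpha ^+ 2 * (2 * s) by rewrite /s; field; rewrite gt_eqF.
  apply: ler_wpM2r; first by rewrite mulr_ge0.
  by rewrite ler_pXn2r ?nnegrE ?(ltW alpha_gt0).
have le_1s : 1 + 2 * s <= (1 + s) ^+ 2.
  have -> : (1 + s) ^+ 2 = 1 + 2 * s + s ^+ 2 by ring.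
  by rewrite lerDl sqr_ge0.
rewrite -(@ler_pXn2r _ 2) ?nnegrE ?mulr_ge0 ?addr_ge0 // exprMn mulrC.
apply: le_trans (ler_wpM2l (sqr_ge0 a) le_1s); rewrite mulrDr mulr1; lra.
Qed.

Lemma squared_update_within (a h b : R) :
  alpha <= `|a| <= Gamma -> alpha <= h <= Gamma ->
  b ^+ 2 = beta * a ^+ 2 + (1 - beta) * h ^+ 2 -> alpha <= `|b| <= Gamma.
Proof.
move=> a_in h_in b2E.
rewrite -sqr_withinE // real_normK ?num_real // b2E -(real_normK (num_real a)).
by apply: convex_comb_within; rewrite sqr_withinE // (le_trans (ltW alpha_gt0)) //;
  case/andP: h_in.
Qed.

Lemma squared_update_le (a h b : R) :
  alpha <= `|a| -> h <= Gamma -> alpha <= h ->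
  b ^+ 2 = beta * a ^+ 2 + (1 - beta) * h ^+ 2 ->
  `|b| <= (1 + (1 - beta) * (Gamma ^+ 2 / (2 * alpha ^+ 2))) * `|a|.
Proof.
move=> a_ge h_le h_ge b2E; rewrite mulrA; apply: le_sqrt_step => //.
  by rewrite mulr_ge0 ?sqr_ge0 // subr_ge0; case/andP: beta_01.
have [beta_ge0 beta_le1] := andP beta_01.
have h2_le : (1 - beta) * h ^+ 2 <= (1 - beta) * Gamma ^+ 2.
  have h_ge0 : 0 <= h by exact: le_trans (ltW alpha_gt0) h_ge.
  apply: ler_wpM2l; first by rewrite subr_ge0.
  by rewrite ler_pXn2r ?nnegrE // (le_trans h_ge0).
have a2_ge0 : 0 <= (1 - beta) * a ^+ 2 by rewrite mulr_ge0 ?sqr_ge0 ?subr_ge0.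
rewrite !real_normK ?num_real // b2E; lra.
Qed.

Lemma linear_update_le (a h : R) :
  alpha <= a -> h <= Gamma ->
  beta * a + (1 - beta) * h <= (1 + (1 - beta) * (2 * Gamma / alpha)) * a.
Proof.
move=> a_ge h_le; have [beta_ge0 beta_le1] := andP beta_01.
have Gamma_le : Gamma <= 2 * Gamma / alpha * a.
  rewrite mulrAC -mulrA; apply: le_trans (_ : 2 * Gamma <= _).
    by rewrite ler_peMl ?ler1n //; exact: le_trans (ltW alpha_gt0) alpha_le_Gamma.
  rewrite ler_peMr ?mulr_ge0 ?(le_trans (ltW alpha_gt0) alpha_le_Gamma) //.
  by rewrite ler_pdivlMr // mul1r.
have h_a : (1 - beta) * (h - a) <= (1 - beta) * (2 * Gamma / alpha * a).
  apply: ler_wpM2l; first by rewrite subr_ge0.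
  have := ltW alpha_gt0; lra.
lra.
Qed.

End UpdateStep.

Lemma Cconst_ge0 (R : realFieldType) (r : rule) (alpha Gamma : R) :
  0 < alpha -> alpha <= Gamma -> 0 <= Cconst r alpha Gamma.
Proof.
move=> alpha_gt0 alpha_le_Gamma.
have Gamma_ge0 : 0 <= Gamma by apply: le_trans alpha_le_Gamma; exact: ltW.
by case: r; rewrite /= divr_ge0 ?mulr_ge0 ?sqr_ge0 ?(ltW alpha_gt0).
Qed.

Lemma Cconst_mul_beta_gap (R : realFieldType) (r : rule) (gamma mu alpha Gamma : R) :
  0 < alpha -> 0 < Gamma ->
  Cconst r alpha Gamma * beta_gap r gamma mu alpha Gamma = gamma * mu / (2 * Gamma).
Proof.
by move=> alpha_gt0 Gamma_gt0; case: r => /=; field;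
  rewrite ?mulf_neq0 ?expf_neq0 ?gt_eqF ?pnatr_eq0.
Qed.

Section Preconditioner.
Variables (R : realFieldType) (d : nat) (alpha Gamma : R).
Variables (beta : nat -> R) (H D : nat -> vec R d).
Hypotheses (alpha_gt0 : 0 < alpha) (alpha_le_Gamma : alpha <= Gamma).
Hypothesis beta_01 : forall t, 0 <= beta t <= 1.
Hypothesis H_within : forall t i, alpha <= H t i <= Gamma.
Hypothesis D0_within : forall i, alpha <= D 0%N i <= Gamma.

Lemma linear_preconditioner_within :
  (forall t, update Linear (beta t.+1) (D t) (H t.+1) (D t.+1)) ->
  forall t i, alpha <= D t i <= Gamma.
Proof.
move=> D_update; elim=> [|t IH] i; first exact: D0_within.
by rewrite (D_update t i) convex_comb_within.
Qed.

Lemma squared_preconditioner_within :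
  (forall t, update Squared (beta t.+1) (D t) (H t.+1) (D t.+1)) ->
  forall t i, alpha <= `|D t i| <= Gamma.
Proof.
move=> D_update; elim=> [|t IH] i.
  have /andP[D0_ge _] := D0_within i.
  by rewrite ger0_norm ?D0_within // (le_trans (ltW alpha_gt0)).
exact: squared_update_within (D_update t i).
Qed.

Lemma clip_update_le (r : rule) :
  (forall t, update r (beta t.+1) (D t) (H t.+1) (D t.+1)) ->
  forall t i, clip alpha (D t.+1) i
    <= (1 + (1 - beta t.+1) * Cconst r alpha Gamma) * clip alpha (D t) i.
Proof.
case: r => D_update t i; have /andP[h_ge h_le] := H_within t.+1 i.
- have /andP[a_ge _] := squared_preconditioner_within D_update t i.
  have /andP[b_ge _] := squared_preconditioner_within D_update t.+1 i.
  rewrite !clip_id //; exact: squared_update_le (D_update t i).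
- have /andP[a_ge _] := linear_preconditioner_within D_update t i.
  have /andP[b_ge _] := linear_preconditioner_within D_update t.+1 i.
  have a_ge0 := le_trans (ltW alpha_gt0) a_ge.
  have b_ge0 := le_trans (ltW alpha_gt0) b_ge.
  rewrite !clip_id ?ger0_norm // (D_update t i); exact: linear_update_le.
Qed.

End Preconditioner.

Theorem corollary1
  (R : realFieldType) (d M : nat) (hM : (0 < M)%N)
  (* problem data *)
  (f : 'I_M -> vec R d -> R) (mu : R) (hmu : 0 <= mu)
  (hconv : forall m, strongly_convex mu (f m))
  (xstar : vec R d)
  (hxstar : forall y : vec R d,
      M%:R^-1 * \sum_(m < M) f m xstar <= M%:R^-1 * \sum_(m < M) f m y)
  (* stochastic gradient realizations: g m t x = grad f_m(x, z_m) at iteration t *)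
  (g : 'I_M -> nat -> vec R d -> vec R d)
  (* preconditioner sequence *)
  (r : rule) (alpha Gamma : R) (halpha : 0 < alpha) (hαΓ : alpha <= Gamma)
  (beta : nat -> R) (hbeta : forall t, 0 <= beta t <= 1)
  (H : nat -> vec R d) (hH : forall t i, alpha <= H t i <= Gamma)
  (D : nat -> vec R d) (hD0 : forall i, alpha <= D 0%N i <= Gamma)
  (hD : forall t, update r (beta t.+1) (D t) (H t.+1) (D t.+1))
  (* algorithm SAVIC *)
  (gamma : R) (hgamma : 0 < gamma)
  (sync : nat -> bool) (hsync0 : sync 0%N)
  (hsync_inf : forall n, exists t, (n <= t)%N /\ sync t)
  (x0 : vec R d) (x : nat -> 'I_M -> vec R d)
  (hx0 : forall m, x 0%N m = x0)
  (hxs : forall t m, sync t ->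
      x t.+1 m = (fun i => M%:R^-1 * \sum_(j < M)
          (x t j i - gamma / clip alpha (D (last_sync sync t)) i * g j t (x t j) i)))
  (hxl : forall t m, ~~ sync t ->
      x t.+1 m = (fun i =>
          x t m i - gamma / clip alpha (D (last_sync sync t)) i * g m t (x t m) i)) :
  forall t : nat,
    wnorm2 (clip alpha (D t.+1)) (vsub (avg (x t.+1)) xstar)
      <= (1 + (1 - beta t.+1) * Cconst r alpha Gamma)
         * wnorm2 (clip alpha (D t)) (vsub (avg (x t.+1)) xstar)
    /\
    (1 - beta_gap r gamma mu alpha Gamma <= beta t.+1 ->
     wnorm2 (clip alpha (D t.+1)) (vsub (avg (x t.+1)) xstar)
      <= (1 + gamma * mu / (2 * Gamma))
         * wnorm2 (clip alpha (D t)) (vsub (avg (x t.+1)) xstar)).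
Proof.
move=> t; set v := vsub _ _.
have Gamma_gt0 : 0 < Gamma by exact: lt_le_trans hαΓ.
have wD_le : wnorm2 (clip alpha (D t.+1)) v
    <= (1 + (1 - beta t.+1) * Cconst r alpha Gamma) * wnorm2 (clip alpha (D t)) v.
  exact: wnorm2_le_scale (clip_update_le halpha hαΓ hbeta hH hD0 hD t).
split=> // beta_ge; apply: (le_trans wD_le); apply: ler_wpM2r.
  by apply: wnorm2_ge0 => i; exact: le_trans (ltW halpha) (clip_ge _ _ _).
rewrite lerD2l -(Cconst_mul_beta_gap r gamma mu halpha Gamma_gt0) mulrC.
by apply: ler_wpM2l; [exact: Cconst_ge0 | lra].
Qed.
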